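(* Let $\alpha=(a_1,\dots,a_w)$ have $m$ nonempty horizontal lists, and let $1\le t<m$. (1) For every $a_i\in\mathrm{Left}(\mathbb{L}^t_\alpha)$, if $dn_\alpha(a_i)$ exists then $dn_\alpha(a_i)\in\mathrm{Left}(\mathbb{L}^{t+1}_\alpha)$. (2) For every $a_i\in\mathrm{Right}(\mathbb{L}^{t+1}_\alpha)$, $un_\alpha(a_i)\in\mathrm{Right}(\mathbb{L}^t_\alpha)$.
   Context: Let $\alpha=(a_1,\dots,a_w)$ be a finite sequence of real numbers, with items identified by their positions. Increasing subsequences are non-strict. $RL_\alpha(a)$ is the maximum length of an increasing subsequence ending at $a$. The horizontal list $\mathbb{L}^t_\alpha$ is the list of items of rising length $t$, ordered by position. The up neighbor $un_\alpha(a_i)$ (resp. down neighbor $dn_\alpha(a_i)$) is the item $a_j$ with the largest $j<i$ such that $RL_\alpha(a_j)=RL_\alpha(a_i)-1$ (resp. $+1$), if any. Further, $un^0_\alpha(a)=a$ and $un^k_\alpha=un_\alpha\circ un^{k-1}_\alpha$. $\mathrm{Left}(\mathbb{L}^t_\alpha)$ is the sublist of items $a\in\mathbb{L}^t_\alpha$ with $un^{t-1}_\alpha(a)=a_1$, and $\mathrm{Right}(\mathbb{L}^t_\alpha)$ is the sublist of the remaining items. *)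

(* The sequence alpha = (a_1..a_w) is a : 'I_w -> R with
   R a real domain (generalizes the real numbers; only the order is used).
   Positions are 0-based: position k : 'I_w stands for a_{k+1}. *)
From HB Require Import structures.
From mathcomp Require Import all_boot all_order all_algebra.
Set Implicit Arguments. Unset Strict Implicit. Unset Printing Implicit Defensive.
Import Order.TTheory GRing.Theory Num.Theory.
Local Open Scope ring_scope.

Section Defs.
Variables (R : realDomainType) (w : nat) (a : 'I_w -> R).

Definition incr_subseq (S : {set 'I_w}) : bool :=
  [forall j in S, forall k in S, (j < k)%N ==> (a j <= a k)].

Definition RL (i : 'I_w) : nat :=
  \max_(S : {set 'I_w} | [&& incr_subseq S, i \in S &
                           [forall j in S, (j <= i)%N]]) #|S|.

Definition inL (t : nat) (i : 'I_w) : bool := RL i == t.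

Definition num_lists : nat := size (undup [seq RL i | i <- enum 'I_w]).

Definition un_pred (i j : 'I_w) : bool := ((j < i)%N && ((RL j).+1 == RL i)).
Definition un (i : 'I_w) : option 'I_w :=
  [pick j | un_pred i j && [forall k, un_pred i k ==> (k <= j)%N]].

Definition dn_pred (i j : 'I_w) : bool := ((j < i)%N && (RL j == (RL i).+1)).
Definition dn (i : 'I_w) : option 'I_w :=
  [pick j | dn_pred i j && [forall k, dn_pred i k ==> (k <= j)%N]].

Definition unk (k : nat) (i : 'I_w) : option 'I_w := iter k (obind un) (Some i).

Definition inLeft (t : nat) (i : 'I_w) : bool :=
  inL t i && (omap (@nat_of_ord w) (unk t.-1 i) == Some 0%N).

Definition inRight (t : nat) (i : 'I_w) : bool := inL t i && ~~ inLeft t i.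

End Defs.

(* Up neighbours are monotone along a horizontal list: if x precedes y and both
   have rising length r, the last item of length r - 1 before x precedes the one
   before y.  Iterating, the chains of up neighbours of x and y stay ordered, so
   Left(L^t) is an initial segment of L^t.  Both claims follow: the down
   neighbour of a left item i has its up neighbour before i, hence in Left(L^t);
   and if un(i) lay in Left(L^t), so would the up chain of i, putting i in
   Left(L^{t+1}). *)
From HB Require Import structures.
From mathcomp Require Import all_boot all_order all_algebra.
From mathcomp Require Import zify.
Import Order.TTheory GRing.Theory Num.Theory.
Set Implicit Arguments. Unset Strict Implicit.

Section RisingLength.
Variables (R : realDomainType) (w : nat) (a : 'I_w -> R).
Local Open Scope ring_scope.

Definition ending_incr_subseq (i : 'I_w) (S : {set 'I_w}) : bool :=
  [&& incr_subseq a S, i \in S & [forall j in S, (j <= i)%N]].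

Lemma incr_subseqP (S : {set 'I_w}) :
  reflect (forall j k : 'I_w, j \in S -> k \in S -> (j < k)%N -> a j <= a k)
          (incr_subseq a S).
Proof.
apply: (iffP forallP) => [H j k jS kS jk | H j].
  by move: (H j); rewrite jS => /forallP/(_ k); rewrite kS jk.
by apply/implyP=> jS; apply/forallP=> k; apply/implyP=> kS; apply/implyP; exact: H.
Qed.

Lemma card_le_RL (i : 'I_w) (S : {set 'I_w}) :
  ending_incr_subseq i S -> (#|S| <= RL a i)%N.
Proof. exact: (@leq_bigmax_cond _ (ending_incr_subseq i) (fun S : {set 'I_w} => #|S|)). Qed.

Lemma RL_witness (i : 'I_w) :
  exists2 S, ending_incr_subseq i S & RL a i = #|S|.
Proof.
have : (0 < #|[pred S | ending_incr_subseq i S]|)%N.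
  apply/card_gt0P; exists [set i]; rewrite inE /ending_incr_subseq set11 /=.
  apply/andP; split.
    by apply/incr_subseqP=> j k /set1P-> /set1P->; rewrite ltnn.
  by apply/forallP=> j; apply/implyP=> /set1P->.
case/(eq_bigmax_cond (fun S : {set 'I_w} => #|S|)) => S; rewrite inE => HS E.
by exists S; rewrite // -E; apply: eq_bigl => T; rewrite inE.
Qed.

(* Appending l to a longest increasing subsequence ending at k. *)
Lemma RL_lt (k l : 'I_w) : (k < l)%N -> a k <= a l -> (RL a k < RL a l)%N.
Proof.
move=> kl akl; case: (RL_witness k) => S /and3P [incS kS leS] ->.
have le_k j : j \in S -> (j <= k)%N by move=> jS; move/forallP: leS => /(_ j); rewrite jS.
have lS : l \notin S by apply/negP=> /le_k; lia.
have -> : (#|S|.+1 = #|l |: S|)%N by rewrite cardsU1 lS.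
apply: card_le_RL.
rewrite /ending_incr_subseq setU11 /=; apply/andP; split.
  apply/incr_subseqP=> j j' /setU1P[->|jS] /setU1P[->|j'S] jj'; first by lia.
  - by have := le_k _ j'S; lia.
  - have := le_k _ jS; rewrite leq_eqVlt => /orP[/eqP/val_inj->//|jk].
    exact: le_trans (incr_subseqP _ incS _ _ jS kS jk) akl.
  - exact: (incr_subseqP _ incS).
by apply/forallP=> j; apply/implyP=> /setU1P[->//|/le_k]; lia.
Qed.

(* The penultimate item of a longest increasing subsequence ending at i. *)
Lemma exists_RL_pred (i : 'I_w) : (1 < RL a i)%N -> exists k, un_pred a i k.
Proof.
move=> RLi; case: (RL_witness i) => S /and3P [incS iS leS] RLiE.
have [k0 k0S] : exists k0, k0 \in S :\ i.
  by apply/card_gt0P; move: RLi; rewrite RLiE (cardsD1 i S) iS add1n.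
case: (arg_maxnP (@nat_of_ord w) k0S) => k /setD1P [ki kS] kmax.
have lt_ki : (k < i)%N.
  move/forallP: leS => /(_ k); rewrite kS leq_eqVlt => /orP[/eqP/val_inj kiE|//].
  by rewrite kiE eqxx in ki.
exists k; rewrite /un_pred lt_ki /=; apply/eqP.
have RLk_ge : (#|S :\ i| <= RL a k)%N.
  apply: card_le_RL; rewrite /ending_incr_subseq; apply/and3P; split.
  - by apply/incr_subseqP=> j j' /setD1P[_ jS] /setD1P[_ j'S]; exact: (incr_subseqP _ incS).
  - exact/setD1P.
  - by apply/forallP=> j; apply/implyP; exact: kmax.
have := RL_lt lt_ki (incr_subseqP _ incS _ _ kS iS lt_ki).
move: RLiE; rewrite (cardsD1 i S) iS add1n => RLiE lt_RL.
by apply/eqP; rewrite eqn_leq lt_RL RLiE ltnS.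
Qed.

Lemma un_someP (i j : 'I_w) : un a i = Some j ->
  [/\ (j < i)%N, (RL a j).+1 = RL a i & forall k, un_pred a i k -> (k <= j)%N].
Proof.
rewrite /un; case: pickP => // j' /andP [/andP [ji /eqP RLj] /forallP kmax] [<-].
by split=> // k; move/implyP: (kmax k).
Qed.

Lemma dn_someP (i j : 'I_w) : dn a i = Some j -> (j < i)%N /\ RL a j = (RL a i).+1.
Proof. by rewrite /dn; case: pickP => // j' /andP [/andP [ji /eqP RLj] _] [<-]. Qed.

Lemma un_exists (i : 'I_w) : (1 < RL a i)%N -> exists j, un a i = Some j.
Proof.
case/exists_RL_pred => k0 Pk0.
case: (arg_maxnP (@nat_of_ord w) Pk0) => j Pj jmax.
rewrite /un; case: pickP => [j' _|/(_ j)]; first by exists j'.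
by rewrite Pj; move/negP; case; apply/forallP=> k; apply/implyP; exact: jmax.
Qed.

Lemma un_le_mono (x y x' y' : 'I_w) : RL a x = RL a y -> (x <= y)%N ->
  un a x = Some x' -> un a y = Some y' -> (x' <= y')%N.
Proof.
move=> RLxy xy /un_someP [x'x RLx' _] /un_someP [_ _ ymax].
by apply: ymax; rewrite /un_pred RLx' RLxy eqxx andbT; lia.
Qed.

Lemma unkSr (s : nat) (i j : 'I_w) : un a i = Some j -> unk a s.+1 i = unk a s j.
Proof. by move=> uij; rewrite /unk iterSr /= uij. Qed.

Lemma unk_le_mono (t : nat) (x y y0 : 'I_w) :
  RL a x = t.+1 -> RL a y = t.+1 -> (x <= y)%N -> unk a t y = Some y0 ->
  exists2 x0, unk a t x = Some x0 & (x0 <= y0)%N.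
Proof.
elim: t x y => [|t IH] x y RLx RLy xy; first by case=> <-; exists x.
have [x1 ux] : exists x1, un a x = Some x1 by apply: un_exists; lia.
have [y1 uy] : exists y1, un a y = Some y1 by apply: un_exists; lia.
case/un_someP: (ux) => _ RLx1 _; case/un_someP: (uy) => _ RLy1 _.
rewrite (unkSr _ ux) (unkSr _ uy).
by apply: IH (un_le_mono _ xy ux uy); lia.
Qed.

Lemma inLeft_prefix (t : nat) (x y : 'I_w) :
  inL a t.+1 x -> (x <= y)%N -> inLeft a t.+1 y -> inLeft a t.+1 x.
Proof.
move=> /eqP RLx xy /andP [/eqP RLy]; rewrite /inLeft /inL RLx eqxx /=.
case uy: (unk a t y) => [y0|] //= /eqP [y0E].
have [x0 -> x0y0] := unk_le_mono RLx RLy xy uy.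
by apply/eqP; congr Some; lia.
Qed.

Lemma inLeft_un (t : nat) (i j : 'I_w) : un a i = Some j ->
  inL a t.+2 i -> inLeft a t.+1 j -> inLeft a t.+2 i.
Proof. by move=> uij Li /andP [_ Lj]; rewrite /inLeft Li (unkSr _ uij). Qed.

End RisingLength.

Theorem lemma5 (R : realDomainType) (w : nat) (a : 'I_w -> R) (m t : nat) :
  num_lists a = m -> (1 <= t)%N -> (t < m)%N ->
  (forall i : 'I_w, inLeft a t i ->
     forall j : 'I_w, dn a i = Some j -> inLeft a t.+1 j) /\
  (forall i : 'I_w, inRight a t.+1 i ->
     exists j : 'I_w, un a i = Some j /\ inRight a t j).
Proof.
move=> _; case: t => // t _ _; split.
- move=> i Li j /dn_someP [ji RLj].
  have RLi : RL a i = t.+1 by case/andP: Li => /eqP.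
  have [k ujk] : exists k, un a j = Some k by apply: un_exists; lia.
  case/un_someP: (ujk) => kj RLk _.
  have Lk : inLeft a t.+1 k.
    by apply: inLeft_prefix Li; [rewrite /inL; apply/eqP | ]; lia.
  by apply: inLeft_un ujk _ Lk; rewrite /inL RLj RLi.
- move=> i /andP [Li notLi].
  have [j uij] : exists j, un a i = Some j by apply: un_exists; move/eqP: Li; lia.
  exists j; split=> //; case/un_someP: (uij) => _ RLj _.
  rewrite /inRight /inL; apply/andP; split; first by apply/eqP; move/eqP: Li; lia.
  by apply: contra notLi; exact: inLeft_un uij Li.
Qed.
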